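(* Let $A$ be a finite abelian group of even order and $H$ a subgroup of $A$. If $H$ contains an element that is not a square in $A$, then $H$ is a subgroup perfect code of $A$.
   Context: $A$ is written additively with identity $0$. An element $x$ of $A$ is a square if $x=2y$ for some $y\in A$; a subset is square-free if it contains no squares. For a square-free $T\subseteq A$, the Cayley sum graph $\mathrm{CayS}(A,T)$ is the simple graph with vertex set $A$ in which distinct $x,y$ are adjacent iff $x+y\in T$. A subset $C$ of the vertex set of a graph is a perfect code if every vertex is at distance at most one from exactly one vertex of $C$. A subgroup $H$ of $A$ is a subgroup perfect code of $A$ if $H$ is a perfect code of $\mathrm{CayS}(A,T)$ for some square-free $T\subseteq A$ (the empty set allowed). *)

From mathcomp Require Import all_boot all_algebra all_fingroup.
Set Implicit Arguments. Unset Strict Implicit. Unset Printing Implicit Defensive.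
Import GRing.Theory.
Local Open Scope ring_scope.

(* A finite abelian group A, written additively, is a finZmodType V;
   its subgroups are the {group V} (the additive finGroupType of V). *)

Definition is_square (V : finZmodType) (x : V) : bool :=
  [exists y : V, x == y + y].

Definition square_free (V : finZmodType) (T : {set V}) : bool :=
  [forall x in T, ~~ is_square x].

Definition cays_adj (V : finZmodType) (T : {set V}) (x y : V) : bool :=
  (x != y) && (x + y \in T).

(* C is a perfect code of Cay S(V,T): every vertex v is at distance
   at most one (i.e. equal or adjacent) from exactly one vertex of C *)
Definition perfect_code (V : finZmodType) (T : {set V}) (C : {set V}) : Prop :=
  forall v : V, #|[set c in C | (c == v) || cays_adj T v c]| = 1%N.

Definition subgroup_perfect_code (V : finZmodType) (H : {group V}) : Prop :=
  exists T : {set V}, square_free T /\ perfect_code T H.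

From mathcomp Require Import all_boot all_algebra all_fingroup.
Set Implicit Arguments. Unset Strict Implicit. Unset Printing Implicit Defensive.
Import GRing.Theory.
Local Open Scope ring_scope.

(* Every coset v + H contains a non-square: if v = 2a is a square and h in H
   is not, then v + h is not a square either, since h = 2(b - a) otherwise.
   Let T pick one non-square r_v in each coset v + H other than H.  Then T is
   square-free and disjoint from H, so a vertex of H is dominated by itself
   only; a vertex v outside H is dominated exactly by the c in H with
   v + c in T, i.e. by c = r_v - v. *)

Section NonsquareTransversal.

Variables (V : finZmodType) (H : {group V}).

Lemma mem_rcosetB (x y : V) : (y \in (H :* x)%g) = (y - x \in H).
Proof. exact: mem_rcoset. Qed.

Lemma rcoset_has_nonsquare (h x : V) :
  h \in H -> ~~ is_square h -> exists2 y, y \in (H :* x)%g & ~~ is_square y.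
Proof.
move=> hH h_ns; have [/existsP[a /eqP x2a] | x_ns] := boolP (is_square x); last first.
  by exists x; rewrite ?rcoset_refl.
exists (h + x); first by rewrite mem_rcosetB addrK.
apply: contra h_ns => /existsP[b /eqP hx2b]; apply/existsP; exists (b - a).
by rewrite -[h](addrK x) hx2b x2a opprD addrACA.
Qed.

Definition nonsquare_rep (x : V) : option V :=
  [pick y in (H :* x)%g | ~~ is_square y].

Definition nonsquare_transversal : {set V} :=
  [set x | (x \notin H) && (nonsquare_rep x == Some x)].

Lemma nonsquare_rep_rcoset (x y : V) :
  y \in (H :* x)%g -> nonsquare_rep y = nonsquare_rep x.
Proof. by move/rcoset_eqP; rewrite /nonsquare_rep => ->. Qed.

Lemma nonsquare_rep_defined (x h : V) :
  h \in H -> ~~ is_square h -> exists r, nonsquare_rep x = Some r.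
Proof.
move=> hH h_ns; have [y xHy y_ns] := rcoset_has_nonsquare x hH h_ns.
by rewrite /nonsquare_rep; case: pickP => [r _ | /(_ y)]; [exists r | rewrite xHy y_ns].
Qed.

Lemma nonsquare_repP (x r : V) :
  nonsquare_rep x = Some r -> r \in (H :* x)%g /\ ~~ is_square r.
Proof. by rewrite /nonsquare_rep; case: pickP => // y /andP[? ?] [<-]. Qed.

Lemma square_free_nonsquare_transversal : square_free nonsquare_transversal.
Proof.
apply/forall_inP => x; rewrite inE => /andP[_ /eqP].
by case/nonsquare_repP.
Qed.

Lemma nonsquare_transversal_notin_subgroup (x : V) :
  x \in nonsquare_transversal -> x \notin H.
Proof. by rewrite inE => /andP[]. Qed.

Lemma dominators_subgroup (v : V) : v \in H ->
  [set c in H | (c == v) || cays_adj nonsquare_transversal v c] = [set v].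
Proof.
move=> vH; apply/setP => c; rewrite !inE /cays_adj.
have [-> | _] := eqVneq c v; first by rewrite vH.
apply/negbTE/andP => -[cH /andP[_ /nonsquare_transversal_notin_subgroup]].
by rewrite groupM.
Qed.

Lemma dominators_outside (v r : V) : v \notin H -> nonsquare_rep v = Some r ->
  [set c in H | (c == v) || cays_adj nonsquare_transversal v c] = [set r - v].
Proof.
move=> vH rep_v; have [rvH _] := nonsquare_repP rep_v; rewrite mem_rcosetB in rvH.
have rH : r \notin H by apply: contra vH => rH; rewrite -[v](subKr r) groupM ?groupV.
apply/setP => c; rewrite !inE /cays_adj.
have [cH | cH] /= := boolP (c \in H); last first.
  by apply/esym/negbTE; apply: contra cH => /eqP ->.
have cv : c != v by apply: contraNneq vH => <-.
have vcH : v + c \in (H :* v)%g by rewrite mem_rcosetB addrAC subrr add0r.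
rewrite (negbTE cv) eq_sym cv inE (nonsquare_rep_rcoset vcH) rep_v /=.
apply/andP/eqP => [[_ /eqP[->]] | ->]; first by rewrite addrAC subrr add0r.
by rewrite addrC subrK rH.
Qed.

Lemma nonsquare_transversal_perfect_code (h : V) :
  h \in H -> ~~ is_square h -> perfect_code nonsquare_transversal H.
Proof.
move=> hH h_ns v; have [vH | vH] := boolP (v \in H).
  by rewrite dominators_subgroup ?cards1.
have [r rep_v] := nonsquare_rep_defined v hH h_ns.
by rewrite (dominators_outside vH rep_v) cards1.
Qed.

End NonsquareTransversal.

Theorem lemma3p4 (V : finZmodType) (H : {group V}) :
  ~~ odd #|V| ->
  (exists2 h : V, h \in H & ~~ is_square h) ->
  subgroup_perfect_code H.
Proof.
move=> _ [h hH h_ns]; exists (nonsquare_transversal H); split.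
  exact: square_free_nonsquare_transversal.
exact: nonsquare_transversal_perfect_code hH h_ns.
Qed.
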